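(* For every Borel measure $\mu$ on $\mathbb R$ (with its usual topology), the restriction of $\mu$ to the open subsets of the Sorgenfrey line $\mathbb R_\ell$ is a continuous valuation.
   Context: The Sorgenfrey line $\mathbb R_\ell$ is $\mathbb R$ with the topology generated by the half-open intervals $[a,b[$, $a<b$; its open sets are Borel subsets of $\mathbb R$. A continuous valuation on a space $X$ is a map $\nu:\mathcal OX\to[0,\infty]$ with $\nu(\emptyset)=0$, monotone, modular, and preserving suprema of directed families of open sets. *)

From mathcomp Require Import all_boot all_order all_algebra.
From mathcomp Require Import all_classical all_reals all_analysis.
Set Implicit Arguments. Unset Strict Implicit. Unset Printing Implicit Defensive.
Import Order.TTheory GRing.Theory Num.Theory.
Local Open Scope classical_set_scope.
Local Open Scope ring_scope.

Definition sorgenfrey_open {R : realType} (A : set R) : Prop :=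
  forall x, A x -> exists a b : R, a < b /\ `[a, b[%classic x /\ `[a, b[%classic `<=` A.

Definition directed_family {T : Type} (D : set (set T)) : Prop :=
  D !=set0 /\ forall U V, D U -> D V -> exists2 W, D W & U `|` V `<=` W.

Definition continuous_valuation {T : Type} {R : realType}
    (O : set (set T)) (nu : set T -> \bar R) : Prop :=
  [/\ (forall U, O U -> (0 <= nu U)%E),
      nu set0 = 0%E,
      (forall U V, O U -> O V -> U `<=` V -> (nu U <= nu V)%E),
      (forall U V, O U -> O V -> (nu (U `|` V) + nu (U `&` V) = nu U + nu V)%E) &
      (forall D : set (set T), D `<=` O -> directed_family D ->
         nu (\bigcup_(U in D) U) = ereal_sup [set nu U | U in D])].

From mathcomp Require Import all_boot all_order all_algebra.
From mathcomp Require Import all_classical all_reals all_analysis.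
Set Implicit Arguments. Unset Strict Implicit. Unset Printing Implicit Defensive.
Import Order.TTheory GRing.Theory Num.Theory.
Local Open Scope classical_set_scope.
Local Open Scope ring_scope.

(* The Sorgenfrey line is hereditarily Lindelof: the union of a family of
   Sorgenfrey-open sets is the union of countably many of them.  Indeed, if
   [x, b[ lies in a member and r is a rational in ]x, b[, then either some
   member contains [y, r[ with y < x, and then a member containing [q, r[ for a
   rational q in ]y, x[ covers x, or x is the least left end of such
   intervals, and a member attaining that least left end covers x.  Hence
   Sorgenfrey-open sets are countable unions of half-open intervals, so Borel,
   and modularity is the additivity of the measure.  For a directed family the countable subfamily
   is enlarged, inside the family, into an increasing sequence with the same
   union, to which continuity from below applies. *)

Lemma measureUI d (T : ringOfSetsType d) (R : realFieldType)
    (mu : {content set T -> \bar R}) (A B : set T) :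
  measurable A -> measurable B ->
  (mu (A `|` B) + mu (A `&` B) = mu A + mu B)%E.
Proof.
move=> mA mB.
rewrite (measureDI mu (measurableU _ _ mA mB) mA) (measureDI mu mB mA).
rewrite setDUl setDv set0U setUK [B `&` A]setIC.
by rewrite [(mu (B `\` A) + _)%E]addeC addeA.
Qed.

Lemma countable_selection (I : countType) T (D : set (set T))
    (P : I -> set T -> Prop) : D !=set0 ->
  exists2 f : nat -> set T, (forall n, D (f n)) &
    forall i U, D U -> P i U -> exists n, P i (f n).
Proof.
move=> [U0 DU0].
have /choice[g gP] : forall i, exists V, D V /\ ((exists2 U, D U & P i U) -> P i V).
  move=> i; case: (pselect (exists2 U, D U & P i U)) => [[U DU PU]|noU].
    by exists U; split.
  by exists U0; split=> // /noU.
exists (fun n => if unpickle n is Some i then g i else U0).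
  by move=> n; case: (unpickle n) => // i; case: (gP i).
move=> i U DU PU; exists (pickle i); rewrite pickleK.
by case: (gP i) => _; apply; exists U.
Qed.

Lemma directed_nondecreasing_majorant T (D : set (set T)) (f : nat -> set T) :
  directed_family D -> (forall n, D (f n)) ->
  exists W : nat -> set T,
    [/\ forall n, D (W n), nondecreasing_seq W & forall n, f n `<=` W n].
Proof.
move=> [_ Ddir] Df.
have /choice[ub ubP] : forall p : set T * set T,
    exists W, D p.1 -> D p.2 -> D W /\ p.1 `|` p.2 `<=` W.
  case=> U V; case: (pselect (D U /\ D V)) => [[DU DV]|DUV].
    by have [W DW UVW] := Ddir U V DU DV; exists W.
  by exists U => DU DV; case: DUV.
pose W := fix W n := if n is m.+1 then ub (W m, f m.+1) else f 0%N.
have DW n : D (W n).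
  by elim: n => [|n IH] //=; case: (ubP (W n, f n.+1) IH (Df n.+1)).
have W_step n : W n `|` f n.+1 `<=` W n.+1.
  by case: (ubP (W n, f n.+1) (DW n) (Df n.+1)).
exists W; split => //.
- by apply/nondecreasing_seqP => n; apply/subsetPset => x Wx; apply: W_step; left.
- by case=> [|n] //= x fx; apply: W_step; right.
Qed.

Lemma measure_nondecreasing_bigcup d (T : sigmaRingType d) (R : realType)
    (mu : {measure set T -> \bar R}) (W : nat -> set T) :
  (forall n, measurable (W n)) -> nondecreasing_seq W ->
  mu (\bigcup_n W n) = ereal_sup (range (mu \o W)).
Proof.
move=> mW ndW.
have ndmuW : nondecreasing_seq (mu \o W).
  move=> m n mn; apply: le_measure; rewrite ?inE //.
  by apply/subsetPset; exact: ndW.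
apply: (cvg_unique (@ereal_hausdorff R) _ (ereal_nondecreasing_cvgn ndmuW)).
by apply: nondecreasing_cvg_mu => //; exact: bigcupT_measurable.
Qed.

Lemma measure_directed_bigcup d (T : sigmaRingType d) (R : realType)
    (mu : {measure set T -> \bar R}) (D : set (set T)) (f : nat -> set T) :
  D `<=` measurable -> directed_family D ->
  (forall n, D (f n)) -> \bigcup_(U in D) U = \bigcup_n f n ->
  mu (\bigcup_(U in D) U) = ereal_sup [set mu U | U in D].
Proof.
move=> mD Ddir Df DE.
have [W [DW ndW fW]] := directed_nondecreasing_majorant Ddir Df.
have DEW : \bigcup_(U in D) U = \bigcup_n W n.
  apply/seteqP; split; last by move=> x [n _ Wx]; exists (W n).
  by rewrite DE => x [n _ fx]; exists n => //; exact: fW.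
apply/eqP; rewrite eq_le; apply/andP; split.
  rewrite DEW measure_nondecreasing_bigcup // => [|n]; last exact: mD.
  by apply: ereal_sup_le => _ [n _ <-]; exists (W n).
apply: ge_ereal_sup => _ [U DU <-]; apply: le_measure; rewrite ?inE.
- exact: mD.
- by rewrite DEW; apply: bigcupT_measurable => n; exact: mD.
- by move=> x Ux; exists U.
Qed.

Section sorgenfrey.
Variable R : realType.

Lemma sorgenfrey_openP (A : set R) :
  sorgenfrey_open A <-> forall x, A x -> exists2 b, x < b & `[x, b[ `<=` A.
Proof.
split=> [oA x Ax|oA x Ax].
  have [a [b [_ [+ abA]]]] := oA x Ax; rewrite /= in_itv /= => /andP[ax xb].
  exists b => // y; rewrite /= in_itv /= => /andP[xy yb]; apply: abA.
  by rewrite /= in_itv /= yb (le_trans ax xy).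
have [b xb xbA] := oA x Ax; exists x, b; split => //; split => //.
by rewrite /= in_itv /= lexx xb.
Qed.

Lemma sorgenfrey_open_itvco (a b : R) : sorgenfrey_open `[a, b[.
Proof.
move=> x abx; exists a, b; split; last by split.
by move: abx; rewrite /= in_itv /= => /andP[ax /(le_lt_trans ax)].
Qed.

Lemma sorgenfrey_lindelof (D : set (set R)) :
  D `<=` sorgenfrey_open -> D !=set0 ->
  exists2 f : nat -> set R, (forall n, D (f n)) & \bigcup_(U in D) U = \bigcup_n f n.
Proof.
move=> DO D0.
(* [inl (q, r)] asks for a member containing [q, r[, and [inr r] for a member
   containing [y, r[ with y the least possible left end. *)
pose P (i : (rat * rat) + rat) (U : set R) := match i with
  | inl (q, r) => `[ratr q, ratr r[ `<=` U
  | inr r => exists2 y, `[y, ratr r[ `<=` U &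
      forall z V, D V -> `[z, ratr r[ `<=` V -> y <= z
  end.
have [f Df fP] := countable_selection P D0.
exists f => //; apply/seteqP; split; last by move=> x [n _ fx]; exists (f n).
move=> x [U DU Ux]; have [b xb xbU] := (sorgenfrey_openP U).1 (DO U DU) x Ux.
have [r] := rat_in_itvoo xb; rewrite in_itv /= => /andP[xr rb].
have xrU : `[x, ratr r[ `<=` U.
  by apply: subset_trans xbU; apply: subset_itvl; rewrite bnd_simp ltW.
have in_f n y : `[y, ratr r[ `<=` f n -> y <= x -> (\bigcup_n f n) x.
  by move=> yrf yx; exists n => //; apply: yrf; rewrite /= in_itv /= yx xr.
case: (pselect (exists y V, [/\ D V, `[y, ratr r[ `<=` V & y < x])).
  move=> [y [V [DV yrV yx]]]; have [q] := rat_in_itvoo yx.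
  rewrite in_itv /= => /andP[yq qx].
  have qrV : `[ratr q, ratr r[ `<=` V.
    by apply: subset_trans yrV; apply: subset_itvr; rewrite bnd_simp ltW.
  have [n qrf] := fP (inl (q, r)) V DV qrV.
  exact: in_f n _ qrf (ltW qx).
move=> no_lower; have x_min : P (inr r) U.
  exists x => // z V DV zrV; rewrite leNgt; apply/negP => zx.
  by apply: no_lower; exists z, V.
have [n [y yrf y_min]] := fP (inr r) U DU x_min.
exact: in_f n y yrf (y_min x U DU xrU).
Qed.

Lemma sorgenfrey_open_measurable (U : set R) : sorgenfrey_open U -> measurable U.
Proof.
move=> oU; pose D := [set V | V `<=` U /\ exists a b, V = `[a, b[%classic].
have DO : D `<=` sorgenfrey_open.
  by move=> _ [_ [a [b ->]]]; exact: sorgenfrey_open_itvco.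
have D0 : D !=set0 by exists set0; split => //; exists 0, 0; rewrite set_itvco0.
have [f Df DE] := sorgenfrey_lindelof DO D0.
have -> : U = \bigcup_(V in D) V.
  apply/seteqP; split; last by move=> x [V [VU _]]; exact: VU.
  move=> x Ux; have [b xb xbU] := (sorgenfrey_openP U).1 oU x Ux.
  by exists `[x, b[%classic; [split; [|exists x, b]|rewrite /= in_itv /= lexx xb].
rewrite DE; apply: bigcupT_measurable => n.
by have [_ [a [b ->]]] := Df n; exact: measurable_itv.
Qed.

End sorgenfrey.

Theorem proposition4p7 (R : realType) (mu : {measure set R -> \bar R}) :
  continuous_valuation (@sorgenfrey_open R) mu.
Proof.
have mO := @sorgenfrey_open_measurable R.
split.
- by move=> U _; exact: measure_ge0.
- exact: measure0.
- by move=> U V /mO mU /mO mV; apply: le_measure; rewrite inE.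
- by move=> U V /mO mU /mO mV; exact: measureUI.
- move=> D DO Ddir; have [f Df DE] := sorgenfrey_lindelof DO Ddir.1.
  by apply: measure_directed_bigcup Ddir Df DE => U /DO /mO.
Qed.
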